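(* Let $G$ be one of the sequent calculi $\mathbf{GE},\mathbf{GM},\mathbf{GMC},\mathbf{GEN},\mathbf{GMN},\mathbf{GK},\mathbf{GEC},\mathbf{GECN},\mathbf{GCE},\mathbf{GCM},\mathbf{GCMC},\mathbf{GCEN},\mathbf{GCMN},\mathbf{GCK},\mathbf{GCKID},\mathbf{GCKCEM},\mathbf{GCKCEMID}$, and let $L=\{\phi : G\vdash\ \Rightarrow\phi\}$ be its logic. Then $G$ has ULIP iff $L$ has ULIP, and $G$ has UIP iff $L$ has UIP.
   Context: Languages: $\mathcal{L}_\Box$ (atoms, $\bot$, $\wedge,\vee,\to$, unary $\Box$) for the calculi whose name does not start with $\mathbf{GC}$, and $\mathcal{L}_\triangleright$ (atoms, $\bot$, $\wedge,\vee,\to$, binary $\triangleright$) otherwise. $\top:=\bot\to\bot$, $\neg A:=A\to\bot$. Positive/negative variables: $V^+(p)=\{p\}$, $V^-(p)=\varnothing$; $V^\pm(\bot)=\varnothing$; $V^\pm(\phi\odot\psi)=V^\pm(\phi)\cup V^\pm(\psi)$ for $\odot\in\{\wedge,\vee\}$; $V^+(\phi\to\psi)=V^-(\phi)\cup V^+(\psi)$, $V^-(\phi\to\psi)=V^+(\phi)\cup V^-(\psi)$; $V^\pm(\Box\phi)=V^\pm(\phi)$; $V^+(\phi\triangleright\psi)=V^-(\phi)\cup V^+(\psi)$, $V^-(\phi\triangleright\psi)=V^+(\phi)\cup V^-(\psi)$; $V=V^+\cup V^-$. $p^\circ$-free means $p\notin V^\circ$; $\diamond$ is the sign opposite to $\circ\in\{+,-\}$.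 Sequents $S=\Gamma\Rightarrow\Delta$ ($\Gamma,\Delta$ finite multisets); $V^+(S)=\bigcup_{\gamma\in\Gamma}V^-(\gamma)\cup\bigcup_{\delta\in\Delta}V^+(\delta)$, $V^-(S)=\bigcup_{\gamma\in\Gamma}V^+(\gamma)\cup\bigcup_{\delta\in\Delta}V^-(\delta)$; for $S=(\Gamma\Rightarrow\Delta)$, $T=(\Pi\Rightarrow\Lambda)$, $S\cdot T=(\Gamma,\Pi\Rightarrow\Delta,\Lambda)$. $G$ has ULIP if for every sequent $S$, atom $p$, $\circ\in\{+,-\}$ there is a $p^\circ$-free formula $\theta$ with $V^\dagger(\theta)\subseteq V^\dagger(S)$ for both $\dagger$, $G\vdash S\cdot(\theta\Rightarrow)$, and for every sequent $\Gamma\Rightarrow\Delta$ with $p\notin V^\diamond(\Gamma\Rightarrow\Delta)$, $G\vdash S\cdot(\Gamma\Rightarrow\Delta)$ implies $G\vdash\Gamma\Rightarrow\theta,\Delta$. UIP for $G$: same without polarities ($\theta$ $p$-free, $V(\theta)\subseteq V(S)$, $\Gamma\Rightarrow\Delta$ with $p\notin V(\Gamma\Rightarrow\Delta)$). ULIP for a logic $L$: for every formula $\phi$, atom $p$, $\circ$, there are $p^\circ$-free $\forall^\circ p\,\phi$, $\exists^\circ p\,\phi$ with $V^\dagger(\cdot)\subseteq V^\dagger(\phi)$ such that $L\vdash\forall^\circ p\,\phi\to\phi$; for $p^\circ$-free $\psi$, $L\vdash\psi\to\phi$ implies $L\vdash\psi\to\forall^\circ p\,\phi$; $L\vdash\phi\to\exists^\circ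 p\,\phi$; for $p^\circ$-free $\psi$, $L\vdash\phi\to\psi$ implies $L\vdash\exists^\circ p\,\phi\to\psi$. UIP for $L$: same without polarities. Calculi: $\mathbf{G3cp}$ has axioms $\Gamma,p\Rightarrow p,\Delta$ ($p$ atomic), $\Gamma,\bot\Rightarrow\Delta$ and the standard invertible context-sharing rules $L\wedge,R\wedge,L\vee,R\vee,L\to,R\to$ (e.g. $L\to$: from $\Gamma\Rightarrow\phi,\Delta$ and $\Gamma,\psi\Rightarrow\Delta$ infer $\Gamma,\phi\to\psi\Rightarrow\Delta$; $R\to$: from $\Gamma,\phi\Rightarrow\psi,\Delta$ infer $\Gamma\Rightarrow\phi\to\psi,\Delta$; $R\vee$: from $\Gamma\Rightarrow\phi,\psi,\Delta$ infer $\Gamma\Rightarrow\phi\vee\psi,\Delta$; $L\wedge$ dually; $R\wedge$, $L\vee$ two-premise). $\mathbf{G3W}=\mathbf{G3cp}$ plus left and right weakening. ''$\alpha\Leftrightarrow\beta$'' as a premise abbreviates $\alpha\Rightarrow\beta$ and $\beta\Rightarrow\alpha$. Modal rules: $(E)$ from $\phi\Leftrightarrow\psi$ infer $\Box\phi\Rightarrow\Box\psi$; $(M)$ from $\phi\Rightarrow\psi$ infer $\Box\phi\Rightarrow\Box\psi$; $(MC)$ ($n\ge1$) from $\phi_1,\dots,\phi_n\Rightarrow\psi$ infer $\Box\phi_1,\dots,\Box\phi_n\Rightarrow\Box\psi$; $(N)$ from $\Rightarrow\psi$ infer $\Rightarrow\Box\psi$; $(EC)$ ($n\ge1$) from $\phi_1,\dots,\phi_n\Rightarrow\psi$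 and $\psi\Rightarrow\phi_i$ ($1\le i\le n$) infer $\Sigma,\Box\phi_1,\dots,\Box\phi_n\Rightarrow\Box\psi,\Lambda$; $(NW)$ from $\Rightarrow\psi$ infer $\Sigma\Rightarrow\Box\psi,\Lambda$. $\mathbf{GE},\mathbf{GM},\mathbf{GMC}$ = $\mathbf{G3W}$ + $(E)$, $(M)$, $(MC)$; $\mathbf{GEN},\mathbf{GMN},\mathbf{GK}$ = these + $(N)$; $\mathbf{GEC}=\mathbf{G3cp}+(EC)$, $\mathbf{GECN}=\mathbf{GEC}+(NW)$. Conditional rules: $(CE)$ from $\phi_0\Leftrightarrow\phi_1$, $\psi_0\Leftrightarrow\psi_1$ infer $\phi_1\triangleright\psi_1\Rightarrow\phi_0\triangleright\psi_0$; $(CM)$ from $\phi_0\Leftrightarrow\phi_1$, $\psi_1\Rightarrow\psi_0$ infer the same; $(CMC)$ ($n\ge1$) from $\phi_0\Leftrightarrow\phi_i$ ($1\le i\le n$), $\psi_1,\dots,\psi_n\Rightarrow\psi_0$ infer $\phi_1\triangleright\psi_1,\dots,\phi_n\triangleright\psi_n\Rightarrow\phi_0\triangleright\psi_0$; $(CN)$ from $\Rightarrow\psi_0$ infer $\Rightarrow\phi_0\triangleright\psi_0$; $(CKID)$ ($I$ a possibly empty finite index multiset) from $\phi_0\Leftrightarrow\phi_i$ ($i\in I$), $\phi_0,\{\psi_i\}_{i\in I}\Rightarrow\psi_0$ infer $\{\phi_i\triangleright\psi_i\}_{i\in I}\Rightarrow\phi_0\triangleright\psi_0$; $(CKCEM)$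 from $\phi_0\Leftrightarrow\phi_r$ ($r\in I\cup J$), $\{\psi_i\}_{i\in I}\Rightarrow\psi_0,\{\psi_j\}_{j\in J}$ infer $\{\phi_i\triangleright\psi_i\}_{i\in I}\Rightarrow\phi_0\triangleright\psi_0,\{\phi_j\triangleright\psi_j\}_{j\in J}$; $(CKCEMID)$ as $(CKCEM)$ but with $\phi_0$ added to the antecedent of the last premise. $\mathbf{GCE},\mathbf{GCM},\mathbf{GCMC},\mathbf{GCKID},\mathbf{GCKCEM},\mathbf{GCKCEMID}$ = $\mathbf{G3W}$ + $(CE)$, $(CM)$, $(CMC)$, $(CKID)$, $(CKCEM)$, $(CKCEMID)$; $\mathbf{GCEN},\mathbf{GCMN},\mathbf{GCK}$ = $\mathbf{GCE},\mathbf{GCM},\mathbf{GCMC}$ + $(CN)$. Each $L$ so defined is a logic (contains classical tautologies, closed under substitution and modus ponens). *)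

From Stdlib Require Import List Permutation.
Import ListNotations.

(* A single syntax type containing both the unary box (for the
   language L_Box) and the binary conditional (for the language L_|>);
   each calculus only uses formulas of its own language (see [in_lang]). *)
Inductive form : Type :=
| Var  : nat -> form
| Bot  : form
| And  : form -> form -> form
| Or   : form -> form -> form
| Imp  : form -> form -> form
| Box  : form -> form
| Cond : form -> form -> form.

Inductive calc : Type :=
| GE | GM | GMC | GEN | GMN | GK | GEC | GECN
| GCE | GCM | GCMC | GCEN | GCMN | GCK | GCKID | GCKCEM | GCKCEMID.

Definition is_cond_calc (G : calc) : bool :=
  match G with
  | GCE | GCM | GCMC | GCEN | GCMN | GCK | GCKID | GCKCEM | GCKCEMID => true
  | _ => false
  end.

Fixpoint in_lang_b (c : bool) (A : form) : Prop :=
  match A with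
  | Var _ | Bot => True
  | And A B | Or A B | Imp A B => in_lang_b c A /\ in_lang_b c B
  | Box A => c = false /\ in_lang_b c A
  | Cond A B => c = true /\ in_lang_b c A /\ in_lang_b c B
  end.

Definition in_lang (G : calc) (A : form) : Prop := in_lang_b (is_cond_calc G) A.

(* Polarity: [occ true A p] means p ∈ V^+(A), [occ false A p] means p ∈ V^-(A). *)
Fixpoint occ (b : bool) (A : form) (p : nat) : Prop :=
  match A with
  | Var q => b = true /\ q = p
  | Bot => False
  | And A B | Or A B => occ b A p \/ occ b B p
  | Imp A B => occ (negb b) A p \/ occ b B p
  | Box A => occ b A p
  | Cond A B => occ (negb b) A p \/ occ b B p
  end.

Definition occ_any (A : form) (p : nat) : Prop := occ true A p \/ occ false A p.

(* Sequents Γ ⇒ Δ: pairs of lists, read as multisets (derivability is closed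
   under permutation of either side, see rule [d_perm]). *)
Definition sequent := (list form * list form)%type.

Definition seq_in_lang (G : calc) (S : sequent) : Prop :=
  (forall A, In A (fst S) -> in_lang G A) /\ (forall A, In A (snd S) -> in_lang G A).

Definition seq_occ (b : bool) (S : sequent) (p : nat) : Prop :=
  (exists A, In A (fst S) /\ occ (negb b) A p) \/
  (exists A, In A (snd S) /\ occ b A p).

Definition seq_occ_any (S : sequent) (p : nat) : Prop :=
  seq_occ true S p \/ seq_occ false S p.

Definition has_W (G : calc) : bool :=
  match G with GEC | GECN => false | _ => true end.
Definition has_E G := match G with GE | GEN => true | _ => false end.
Definition has_M G := match G with GM | GMN => true | _ => false end.
Definition has_MC G := match G with GMC | GK => true | _ => false end.
Definition has_N G := match G with GEN | GMN | GK => true | _ => false end.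
Definition has_EC G := match G with GEC | GECN => true | _ => false end.
Definition has_NW G := match G with GECN => true | _ => false end.
Definition has_CE G := match G with GCE | GCEN => true | _ => false end.
Definition has_CM G := match G with GCM | GCMN => true | _ => false end.
Definition has_CMC G := match G with GCMC | GCK => true | _ => false end.
Definition has_CN G := match G with GCEN | GCMN | GCK => true | _ => false end.
Definition has_CKID G := match G with GCKID => true | _ => false end.
Definition has_CKCEM G := match G with GCKCEM => true | _ => false end.
Definition has_CKCEMID G := match G with GCKCEMID => true | _ => false end.

Definition condp (x : form * form) : form := Cond (fst x) (snd x).

Inductive deriv (G : calc) : list form -> list form -> Prop :=
| d_perm : forall Γ Δ Γ' Δ', deriv G Γ Δ -> Permutation Γ Γ' -> Permutation Δ Δ' ->
    deriv G Γ' Δ'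
| d_ax : forall p Γ Δ, deriv G (Var p :: Γ) (Var p :: Δ)
| d_bot : forall Γ Δ, deriv G (Bot :: Γ) Δ
| d_Land : forall A B Γ Δ, deriv G (A :: B :: Γ) Δ -> deriv G (And A B :: Γ) Δ
| d_Rand : forall A B Γ Δ, deriv G Γ (A :: Δ) -> deriv G Γ (B :: Δ) ->
    deriv G Γ (And A B :: Δ)
| d_Lor : forall A B Γ Δ, deriv G (A :: Γ) Δ -> deriv G (B :: Γ) Δ ->
    deriv G (Or A B :: Γ) Δ
| d_Ror : forall A B Γ Δ, deriv G Γ (A :: B :: Δ) -> deriv G Γ (Or A B :: Δ)
| d_Limp : forall A B Γ Δ, deriv G Γ (A :: Δ) -> deriv G (B :: Γ) Δ ->
    deriv G (Imp A B :: Γ) Δ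
| d_Rimp : forall A B Γ Δ, deriv G (A :: Γ) (B :: Δ) -> deriv G Γ (Imp A B :: Δ)
| d_LW : forall A Γ Δ, has_W G = true -> deriv G Γ Δ -> deriv G (A :: Γ) Δ
| d_RW : forall A Γ Δ, has_W G = true -> deriv G Γ Δ -> deriv G Γ (A :: Δ)
| d_E : forall A B, has_E G = true -> deriv G [A] [B] -> deriv G [B] [A] ->
    deriv G [Box A] [Box B]
| d_M : forall A B, has_M G = true -> deriv G [A] [B] -> deriv G [Box A] [Box B]
| d_MC : forall As B, has_MC G = true -> As <> [] -> deriv G As [B] ->
    deriv G (map Box As) [Box B]
| d_N : forall B, has_N G = true -> deriv G [] [B] -> deriv G [] [Box B]
| d_EC : forall As B Σ Λ, has_EC G = true -> As <> [] -> deriv G As [B] ->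
    (forall A, In A As -> deriv G [B] [A]) ->
    deriv G (Σ ++ map Box As) (Box B :: Λ)
| d_NW : forall B Σ Λ, has_NW G = true -> deriv G [] [B] -> deriv G Σ (Box B :: Λ)
| d_CE : forall A0 A1 B0 B1, has_CE G = true ->
    deriv G [A0] [A1] -> deriv G [A1] [A0] -> deriv G [B0] [B1] -> deriv G [B1] [B0] ->
    deriv G [Cond A1 B1] [Cond A0 B0]
| d_CM : forall A0 A1 B0 B1, has_CM G = true ->
    deriv G [A0] [A1] -> deriv G [A1] [A0] -> deriv G [B1] [B0] ->
    deriv G [Cond A1 B1] [Cond A0 B0]
| d_CMC : forall (ps : list (form * form)) A0 B0, has_CMC G = true -> ps <> [] ->
    (forall x, In x ps -> deriv G [A0] [fst x] /\ deriv G [fst x] [A0]) ->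
    deriv G (map snd ps) [B0] ->
    deriv G (map condp ps) [Cond A0 B0]
| d_CN : forall A0 B0, has_CN G = true -> deriv G [] [B0] -> deriv G [] [Cond A0 B0]
| d_CKID : forall (ps : list (form * form)) A0 B0, has_CKID G = true ->
    (forall x, In x ps -> deriv G [A0] [fst x] /\ deriv G [fst x] [A0]) ->
    deriv G (A0 :: map snd ps) [B0] ->
    deriv G (map condp ps) [Cond A0 B0]
| d_CKCEM : forall (ps qs : list (form * form)) A0 B0, has_CKCEM G = true ->
    (forall x, In x (ps ++ qs) -> deriv G [A0] [fst x] /\ deriv G [fst x] [A0]) ->
    deriv G (map snd ps) (B0 :: map snd qs) ->
    deriv G (map condp ps) (Cond A0 B0 :: map condp qs)
| d_CKCEMID : forall (ps qs : list (form * form)) A0 B0, has_CKCEMID G = true ->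
    (forall x, In x (ps ++ qs) -> deriv G [A0] [fst x] /\ deriv G [fst x] [A0]) ->
    deriv G (A0 :: map snd ps) (B0 :: map snd qs) ->
    deriv G (map condp ps) (Cond A0 B0 :: map condp qs).

Definition Lthm (G : calc) (A : form) : Prop := deriv G [] [A].

(* ULIP for the calculus G (sign s: true = +, false = -). *)
Definition ULIP_calc (G : calc) : Prop :=
  forall (S : sequent) (p : nat) (s : bool), seq_in_lang G S ->
  exists th : form,
    in_lang G th /\ ~ occ s th p /\
    (forall b q, occ b th q -> seq_occ b S q) /\
    deriv G (th :: fst S) (snd S) /\
    (forall Γ Δ : list form, seq_in_lang G (Γ, Δ) -> ~ seq_occ (negb s) (Γ, Δ) p ->
       deriv G (fst S ++ Γ) (snd S ++ Δ) -> deriv G Γ (th :: Δ)).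

Definition UIP_calc (G : calc) : Prop :=
  forall (S : sequent) (p : nat), seq_in_lang G S ->
  exists th : form,
    in_lang G th /\ ~ occ_any th p /\
    (forall q, occ_any th q -> seq_occ_any S q) /\
    deriv G (th :: fst S) (snd S) /\
    (forall Γ Δ : list form, seq_in_lang G (Γ, Δ) -> ~ seq_occ_any (Γ, Δ) p ->
       deriv G (fst S ++ Γ) (snd S ++ Δ) -> deriv G Γ (th :: Δ)).

Definition ULIP_logic (G : calc) : Prop :=
  forall (phi : form) (p : nat) (s : bool), in_lang G phi ->
  exists fa ex : form,
    in_lang G fa /\ in_lang G ex /\ ~ occ s fa p /\ ~ occ s ex p /\
    (forall b q, occ b fa q -> occ b phi q) /\
    (forall b q, occ b ex q -> occ b phi q) /\
    Lthm G (Imp fa phi) /\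
    (forall psi, in_lang G psi -> ~ occ s psi p ->
       Lthm G (Imp psi phi) -> Lthm G (Imp psi fa)) /\
    Lthm G (Imp phi ex) /\
    (forall psi, in_lang G psi -> ~ occ s psi p ->
       Lthm G (Imp phi psi) -> Lthm G (Imp ex psi)).

Definition UIP_logic (G : calc) : Prop :=
  forall (phi : form) (p : nat), in_lang G phi ->
  exists fa ex : form,
    in_lang G fa /\ in_lang G ex /\ ~ occ_any fa p /\ ~ occ_any ex p /\
    (forall q, occ_any fa q -> occ_any phi q) /\
    (forall q, occ_any ex q -> occ_any phi q) /\
    Lthm G (Imp fa phi) /\
    (forall psi, in_lang G psi -> ~ occ_any psi p ->
       Lthm G (Imp psi phi) -> Lthm G (Imp psi fa)) /\
    Lthm G (Imp phi ex) /\
    (forall psi, in_lang G psi -> ~ occ_any psi p ->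
       Lthm G (Imp phi psi) -> Lthm G (Imp ex psi)).

(* A sequent Γ ⇒ Δ is represented by the formula [sform (Γ, Δ)] (Γ → ⋁Δ), and
   the context Γ ⇒ Δ of the uniformity clause by the single antecedent formula
   ¬[sform (Γ, Δ)], whose positive variables are the negative variables of
   Γ ⇒ Δ.  Given ULIP (UIP) for G, the interpolant of ⇒ φ is ∀p φ and the
   negated interpolant of φ ⇒ is ∃p φ.  Conversely, ∀p [sform S] is an
   interpolant of S.  Translating back and forth only needs admissibility of
   weakening and the invertibility of R→, of the left premise of L→ and of R⊥;
   no cut is involved. *)
From Stdlib Require Import List Permutation Bool Lia.
Import ListNotations.

Lemma form_eq_dec (A B : form) : {A = B} + {A <> B}.
Proof. decide equality; apply PeanoNat.Nat.eq_dec. Qed.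

Lemma perm_count {l l' : list form} :
  Permutation l l' -> forall z, count_occ form_eq_dec l z = count_occ form_eq_dec l' z.
Proof. apply Permutation_count_occ. Qed.

Lemma perm_head_in {A} (x : A) l l' : Permutation l (x :: l') -> In x l.
Proof. intro H. apply (Permutation_in x (Permutation_sym H)). now left. Qed.

Lemma perm_cons_split {A} (x z : A) l l' : Permutation (z :: l) (x :: l') ->
  (z = x /\ Permutation l l') \/
  exists m, Permutation l (x :: m) /\ Permutation l' (z :: m).
Proof.
  intro H. destruct (perm_head_in _ _ _ H) as [->|Hin].
  - left. split; [reflexivity|]. exact (Permutation_cons_inv H).
  - right. apply in_split in Hin as (l1 & l2 & ->). exists (l1 ++ l2). split.
    + symmetry. apply Permutation_middle.
    + apply (Permutation_cons_inv (a := x)). rewrite <- H.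
      symmetry. apply (Permutation_middle (z :: l1)).
Qed.

Lemma perm_app_split {A} (x : A) l1 l2 l' : Permutation (l1 ++ l2) (x :: l') -> ~ In x l2 ->
  exists m, Permutation l1 (x :: m) /\ Permutation l' (m ++ l2).
Proof.
  intros H Hx. destruct (in_app_or _ _ _ (perm_head_in _ _ _ H)) as [Hin|]; [|contradiction].
  apply in_split in Hin as (a & b & ->). exists (a ++ b). split.
  - symmetry. apply Permutation_middle.
  - apply (Permutation_cons_inv (a := x)). rewrite <- H, <- !app_assoc.
    symmetry. apply Permutation_middle.
Qed.

Lemma in_map_Box A As : In A (map Box As) -> exists B, A = Box B.
Proof. intro H. apply in_map_iff in H as (B & <- & _). now exists B. Qed.

Lemma in_map_condp A ps : In A (map condp ps) -> exists B C, A = Cond B C.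
Proof. intro H. apply in_map_iff in H as ([B C] & <- & _). now exists B, C. Qed.

Ltac perm_solve :=
  apply (Permutation_count_occ form_eq_dec);
  let z := fresh "z" in intro z;
  repeat match goal with
         | H : Permutation _ _ |- _ => generalize (perm_count H z); clear H
         end;
  repeat progress (simpl; rewrite ?count_occ_app);
  repeat match goal with |- context [form_eq_dec ?a ?b] => destruct (form_eq_dec a b) end;
  intros; lia.

Ltac reorder Γ Δ := apply (d_perm _ Γ Δ); [| perm_solve | perm_solve].

Ltac from t := eapply d_perm; [apply t; perm_solve | perm_solve | perm_solve].

Ltac from_premise := match goal with H : deriv _ _ _ |- _ => from H end.

Ltac not_principal HP :=
  apply perm_head_in in HP; simpl in HP;
  repeat match type of HP with
         | _ \/ _ => destruct HP as [HP|HP]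
         | In _ (map Box _) => apply in_map_Box in HP as [? HP]
         | In _ (map condp _) => apply in_map_condp in HP as (? & ? & HP)
         end;
  (discriminate || contradiction).

Ltac case_principal HP :=
  let m := fresh "m" in
  destruct (perm_cons_split _ _ _ _ HP) as [[Heq Hperm]|(m & Hm & Hm')];
  [try discriminate; try (injection Heq as <- <-) |].

Lemma deriv_weaken_r G Γ Δ A : deriv G Γ Δ -> deriv G Γ (A :: Δ).
Proof.
  destruct (has_W G) eqn:HW; [intro; now apply d_RW|].
  (* In GEC and GECN, weakening is absorbed by the axioms and by the contexts
     of (EC) and (NW). *)
  intro Hd; revert A; induction Hd; intro Z; try solve [destruct G; discriminate].
  - from (IHHd Z).
  - reorder (Var p :: Γ) (Var p :: Z :: Δ). apply d_ax.
  - apply d_bot.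
  - apply d_Land, IHHd.
  - reorder Γ (And A B :: Z :: Δ). apply d_Rand; [from (IHHd1 Z)|from (IHHd2 Z)].
  - apply d_Lor; [apply IHHd1|apply IHHd2].
  - reorder Γ (Or A B :: Z :: Δ). apply d_Ror. from (IHHd Z).
  - apply d_Limp; [from (IHHd1 Z)|apply IHHd2].
  - reorder Γ (Imp A B :: Z :: Δ). apply d_Rimp. from (IHHd Z).
  - reorder (Σ ++ map Box As) (Box B :: Z :: Λ). now apply d_EC.
  - reorder Σ (Box B :: Z :: Λ). now apply d_NW.
Qed.

Lemma deriv_Rimp_inv G Γ Δ : deriv G Γ Δ ->
  forall X Y D, Permutation Δ (Imp X Y :: D) -> deriv G (X :: Γ) (Y :: D).
Proof.
  induction 1; intros X Y D HP; try solve [not_principal HP].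
  - from (IHderiv X Y D).
  - case_principal HP. reorder (Var p :: X :: Γ) (Var p :: Y :: m). apply d_ax.
  - reorder (Bot :: X :: Γ) (Y :: D). apply d_bot.
  - reorder (And A B :: X :: Γ) (Y :: D). apply d_Land. from (IHderiv X Y D).
  - case_principal HP. reorder (X :: Γ) (And A B :: Y :: m).
    apply d_Rand; [from (IHderiv1 X Y (A :: m))|from (IHderiv2 X Y (B :: m))].
  - reorder (Or A B :: X :: Γ) (Y :: D).
    apply d_Lor; [from (IHderiv1 X Y D)|from (IHderiv2 X Y D)].
  - case_principal HP. reorder (X :: Γ) (Or A B :: Y :: m).
    apply d_Ror. from (IHderiv X Y (A :: B :: m)).
  - reorder (Imp A B :: X :: Γ) (Y :: D).
    apply d_Limp; [from (IHderiv1 X Y (A :: D))|from (IHderiv2 X Y D)].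
  - case_principal HP.
    + from_premise.
    + reorder (X :: Γ) (Imp A B :: Y :: m). apply d_Rimp. from (IHderiv X Y (B :: m)).
  - reorder (A :: X :: Γ) (Y :: D). apply d_LW; [assumption|from (IHderiv X Y D)].
  - case_principal HP.
    + apply d_LW, d_RW; [assumption..|from_premise].
    + reorder (X :: Γ) (A :: Y :: m). apply d_RW; [assumption|from (IHderiv X Y m)].
  - case_principal HP. reorder ((X :: Σ) ++ map Box As) (Box B :: Y :: m). now apply d_EC.
  - case_principal HP. reorder (X :: Σ) (Box B :: Y :: m). now apply d_NW.
Qed.

Lemma deriv_Limp_inv_l G Γ Δ : deriv G Γ Δ ->
  forall X Y C, Permutation Γ (Imp X Y :: C) -> deriv G C (X :: Δ).
Proof.
  induction 1; intros X Y C HP; try solve [not_principal HP].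
  - from (IHderiv X Y C).
  - case_principal HP. reorder (Var p :: m) (Var p :: X :: Δ). apply d_ax.
  - case_principal HP. reorder (Bot :: m) (X :: Δ). apply d_bot.
  - case_principal HP. reorder (And A B :: m) (X :: Δ).
    apply d_Land. from (IHderiv X Y (A :: B :: m)).
  - reorder C (And A B :: X :: Δ).
    apply d_Rand; [from (IHderiv1 X Y C)|from (IHderiv2 X Y C)].
  - case_principal HP. reorder (Or A B :: m) (X :: Δ).
    apply d_Lor; [from (IHderiv1 X Y (A :: m))|from (IHderiv2 X Y (B :: m))].
  - reorder C (Or A B :: X :: Δ). apply d_Ror. from (IHderiv X Y C).
  - case_principal HP.
    + from_premise.
    + reorder (Imp A B :: m) (X :: Δ).
      apply d_Limp; [from (IHderiv1 X Y m)|from (IHderiv2 X Y (B :: m))].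
  - reorder C (Imp A B :: X :: Δ). apply d_Rimp. from (IHderiv X Y (A :: C)).
  - case_principal HP.
    + apply d_RW; [assumption|from_premise].
    + reorder (A :: m) (X :: Δ). apply d_LW; [assumption|from (IHderiv X Y m)].
  - reorder C (A :: X :: Δ). apply d_RW; [assumption|from (IHderiv X Y C)].
  - destruct (perm_app_split _ _ _ _ HP) as (m & Hm & Hm').
    { intro Hin. apply in_map_Box in Hin as [? Hin]. discriminate. }
    reorder (m ++ map Box As) (Box B :: X :: Λ). now apply d_EC.
  - reorder C (Box B :: X :: Λ). now apply d_NW.
Qed.

Lemma deriv_Rbot_inv G Γ Δ : deriv G Γ Δ ->
  forall D, Permutation Δ (Bot :: D) -> deriv G Γ D.
Proof.
  induction 1; intros D HP; try solve [not_principal HP].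
  - from (IHderiv D).
  - case_principal HP. reorder (Var p :: Γ) (Var p :: m). apply d_ax.
  - apply d_bot.
  - apply d_Land, IHderiv, HP.
  - case_principal HP. reorder Γ (And A B :: m).
    apply d_Rand; [from (IHderiv1 (A :: m))|from (IHderiv2 (B :: m))].
  - apply d_Lor; [apply IHderiv1, HP|apply IHderiv2, HP].
  - case_principal HP. reorder Γ (Or A B :: m). apply d_Ror. from (IHderiv (A :: B :: m)).
  - apply d_Limp; [from (IHderiv1 (A :: D))|apply IHderiv2, HP].
  - case_principal HP. reorder Γ (Imp A B :: m). apply d_Rimp. from (IHderiv (B :: m)).
  - apply d_LW; [assumption|apply IHderiv, HP].
  - case_principal HP.
    + from_premise.
    + reorder Γ (A :: m). apply d_RW; [assumption|from (IHderiv m)].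
  - case_principal HP. reorder (Σ ++ map Box As) (Box B :: m). now apply d_EC.
  - case_principal HP. reorder Σ (Box B :: m). now apply d_NW.
Qed.

Definition Neg (A : form) : form := Imp A Bot.

(* Disjunction is encoded as ¬A → D and conjunction by currying, so that
   decomposing [sform S] only uses the invertible rules proved above. *)
Definition disj (Δ : list form) : form := fold_right (fun A D => Imp (Neg A) D) Bot Δ.

Definition sform (S : sequent) : form := fold_right Imp (disj (snd S)) (fst S).

Lemma disj_intro G Γ Δ0 Δ : deriv G Γ (Δ0 ++ Δ) -> deriv G Γ (disj Δ0 :: Δ).
Proof.
  revert Γ Δ; induction Δ0 as [|A Δ0 IH]; simpl; intros Γ Δ Hd.
  - now apply deriv_weaken_r.
  - apply d_Rimp, IH, d_Limp; [exact Hd|apply d_bot].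
Qed.

Lemma disj_inv G Γ Δ0 Δ : deriv G Γ (disj Δ0 :: Δ) -> deriv G Γ (Δ0 ++ Δ).
Proof.
  revert Γ Δ; induction Δ0 as [|A Δ0 IH]; simpl; intros Γ Δ Hd.
  - exact (deriv_Rbot_inv _ _ _ Hd Δ (Permutation_refl _)).
  - apply (deriv_Limp_inv_l _ (Neg A :: Γ) (Δ0 ++ Δ)) with (Y := Bot); [|reflexivity].
    apply IH, (deriv_Rimp_inv _ _ _ Hd); reflexivity.
Qed.

Lemma sform_intro G Γ0 Δ0 Γ Δ :
  deriv G (Γ0 ++ Γ) (Δ0 ++ Δ) -> deriv G Γ (sform (Γ0, Δ0) :: Δ).
Proof.
  unfold sform; simpl; revert Γ; induction Γ0 as [|A Γ0 IH]; simpl; intros Γ Hd.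
  - now apply disj_intro.
  - apply d_Rimp, IH. from Hd.
Qed.

Lemma sform_inv G Γ0 Δ0 Γ Δ :
  deriv G Γ (sform (Γ0, Δ0) :: Δ) -> deriv G (Γ0 ++ Γ) (Δ0 ++ Δ).
Proof.
  unfold sform; simpl; revert Γ; induction Γ0 as [|A Γ0 IH]; simpl; intros Γ Hd.
  - now apply disj_inv.
  - from (IH (A :: Γ) (deriv_Rimp_inv _ _ _ Hd _ _ Δ (Permutation_refl _))).
Qed.

Lemma occ_disj b Δ q : occ b (disj Δ) q <-> exists A, In A Δ /\ occ b A q.
Proof.
  induction Δ as [|A Δ IH]; simpl.
  - firstorder.
  - rewrite negb_involutive, IH. firstorder congruence.
Qed.

Lemma occ_sform b S q : occ b (sform S) q <-> seq_occ b S q.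
Proof.
  destruct S as [Γ Δ]; unfold sform, seq_occ; simpl.
  induction Γ as [|A Γ IH]; simpl.
  - rewrite occ_disj. firstorder.
  - rewrite IH. firstorder congruence.
Qed.

Lemma occ_Neg b A q : occ b (Neg A) q <-> occ (negb b) A q.
Proof. simpl. tauto. Qed.

Lemma occ_any_Neg A q : occ_any (Neg A) q <-> occ_any A q.
Proof. unfold occ_any. rewrite !occ_Neg. simpl. tauto. Qed.

Lemma occ_any_sform S q : occ_any (sform S) q <-> seq_occ_any S q.
Proof. unfold occ_any, seq_occ_any. now rewrite !occ_sform. Qed.

Lemma seq_occ_succ1 b A q : seq_occ b ([], [A]) q <-> occ b A q.
Proof. unfold seq_occ; simpl. firstorder congruence. Qed.

Lemma seq_occ_ante1 b A q : seq_occ b ([A], []) q <-> occ (negb b) A q.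
Proof. unfold seq_occ; simpl. firstorder congruence. Qed.

Lemma seq_occ_any_succ1 A q : seq_occ_any ([], [A]) q <-> occ_any A q.
Proof. unfold seq_occ_any, occ_any. now rewrite !seq_occ_succ1. Qed.

Lemma seq_occ_any_ante1 A q : seq_occ_any ([A], []) q <-> occ_any A q.
Proof. unfold seq_occ_any, occ_any. rewrite !seq_occ_ante1. simpl. tauto. Qed.

Lemma in_lang_Neg G A : in_lang G (Neg A) <-> in_lang G A.
Proof. unfold in_lang; simpl. tauto. Qed.

Lemma in_lang_sform G S : seq_in_lang G S -> in_lang G (sform S).
Proof.
  destruct S as [Γ Δ]; intros [HΓ HΔ]; unfold in_lang, sform in *; simpl in *.
  induction Γ as [|A Γ IH]; simpl.
  - induction Δ as [|B Δ IHΔ]; simpl; [exact I|].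
    repeat split; auto with datatypes.
  - split; auto with datatypes.
Qed.

Lemma seq_in_lang_succ1 G A : in_lang G A -> seq_in_lang G ([], [A]).
Proof. split; simpl; intros B HB; [contradiction|now destruct HB as [<-|[]]]. Qed.

Lemma seq_in_lang_ante1 G A : in_lang G A -> seq_in_lang G ([A], []).
Proof. split; simpl; intros B HB; [now destruct HB as [<-|[]]|contradiction]. Qed.

Lemma Lthm_imp_inv G A B : Lthm G (Imp A B) -> deriv G [A] [B].
Proof. intro H. exact (deriv_Rimp_inv _ _ _ H A B [] (Permutation_refl _)). Qed.

Lemma Lthm_imp_sform_inv G th S : Lthm G (Imp th (sform S)) -> deriv G (th :: fst S) (snd S).
Proof.
  destruct S as [Γ Δ]; intro H. apply Lthm_imp_inv, sform_inv in H. from H.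
Qed.

Lemma Lthm_neg_sform_intro G S Γ Δ :
  deriv G (fst S ++ Γ) (snd S ++ Δ) -> Lthm G (Imp (Neg (sform (Γ, Δ))) (sform S)).
Proof.
  destruct S as [Γ0 Δ0]; simpl; intro Hd.
  apply d_Rimp, sform_intro. reorder (Neg (sform (Γ, Δ)) :: Γ0) Δ0.
  apply d_Limp; [|apply d_bot]. apply sform_intro. from Hd.
Qed.

Lemma Lthm_neg_sform_inv G Γ Δ th :
  Lthm G (Imp (Neg (sform (Γ, Δ))) th) -> deriv G Γ (th :: Δ).
Proof.
  intro H. apply Lthm_imp_inv in H.
  pose proof (deriv_Limp_inv_l _ _ _ H _ _ [] (Permutation_refl _)) as Hsf.
  apply sform_inv in Hsf. from Hsf.
Qed.

Lemma ULIP_calc_logic G : ULIP_calc G -> ULIP_logic G.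
Proof.
  intros HG phi p s Hphi.
  destruct (HG ([], [phi]) p s (seq_in_lang_succ1 _ _ Hphi))
    as (fa & Lfa & Nfa & Vfa & Dfa & Ufa).
  destruct (HG ([phi], []) p (negb s) (seq_in_lang_ante1 _ _ Hphi))
    as (th & Lth & Nth & Vth & Dth & Uth).
  simpl in *. exists fa, (Neg th).
  split; [exact Lfa|]. split; [now apply in_lang_Neg|].
  split; [exact Nfa|]. split; [now rewrite occ_Neg|].
  split; [intros b q Hq; now apply seq_occ_succ1, Vfa|].
  split.
  { intros b q Hq. rewrite occ_Neg in Hq.
    apply Vth, seq_occ_ante1 in Hq. now rewrite negb_involutive in Hq. }
  split; [now apply d_Rimp|].
  split.
  { intros psi Hpsi Npsi Hd. apply d_Rimp, (Ufa [psi] []).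
    - now apply seq_in_lang_ante1.
    - now rewrite seq_occ_ante1, negb_involutive.
    - now apply Lthm_imp_inv. }
  split; [now apply d_Rimp, d_Rimp, deriv_weaken_r|].
  intros psi Hpsi Npsi Hd. apply d_Rimp, d_Limp; [|apply d_bot]. apply (Uth [] [psi]).
  - now apply seq_in_lang_succ1.
  - now rewrite seq_occ_succ1, negb_involutive.
  - now apply Lthm_imp_inv.
Qed.

Lemma ULIP_logic_calc G : ULIP_logic G -> ULIP_calc G.
Proof.
  intros HL S p s HS.
  destruct (HL (sform S) p s (in_lang_sform _ _ HS))
    as (fa & _ & Lfa & _ & Nfa & _ & Vfa & _ & Dfa & Ufa & _).
  exists fa. split; [exact Lfa|]. split; [exact Nfa|].
  split; [intros b q Hq; now apply occ_sform, Vfa|].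
  split; [now apply Lthm_imp_sform_inv|].
  intros Γ Δ HΓΔ Np Hd. apply Lthm_neg_sform_inv, Ufa.
  - now apply in_lang_Neg, in_lang_sform.
  - now rewrite occ_Neg, occ_sform.
  - now apply Lthm_neg_sform_intro.
Qed.

Lemma UIP_calc_logic G : UIP_calc G -> UIP_logic G.
Proof.
  intros HG phi p Hphi.
  destruct (HG ([], [phi]) p (seq_in_lang_succ1 _ _ Hphi))
    as (fa & Lfa & Nfa & Vfa & Dfa & Ufa).
  destruct (HG ([phi], []) p (seq_in_lang_ante1 _ _ Hphi))
    as (th & Lth & Nth & Vth & Dth & Uth).
  simpl in *. exists fa, (Neg th).
  split; [exact Lfa|]. split; [now apply in_lang_Neg|].
  split; [exact Nfa|]. split; [now rewrite occ_any_Neg|].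
  split; [intros q Hq; now apply seq_occ_any_succ1, Vfa|].
  split; [intros q Hq; now apply seq_occ_any_ante1, Vth, occ_any_Neg|].
  split; [now apply d_Rimp|].
  split.
  { intros psi Hpsi Npsi Hd. apply d_Rimp, (Ufa [psi] []).
    - now apply seq_in_lang_ante1.
    - now rewrite seq_occ_any_ante1.
    - now apply Lthm_imp_inv. }
  split; [now apply d_Rimp, d_Rimp, deriv_weaken_r|].
  intros psi Hpsi Npsi Hd. apply d_Rimp, d_Limp; [|apply d_bot]. apply (Uth [] [psi]).
  - now apply seq_in_lang_succ1.
  - now rewrite seq_occ_any_succ1.
  - now apply Lthm_imp_inv.
Qed.

Lemma UIP_logic_calc G : UIP_logic G -> UIP_calc G.
Proof.
  intros HL S p HS.
  destruct (HL (sform S) p (in_lang_sform _ _ HS))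
    as (fa & _ & Lfa & _ & Nfa & _ & Vfa & _ & Dfa & Ufa & _).
  exists fa. split; [exact Lfa|]. split; [exact Nfa|].
  split; [intros q Hq; now apply occ_any_sform, Vfa|].
  split; [now apply Lthm_imp_sform_inv|].
  intros Γ Δ HΓΔ Np Hd. apply Lthm_neg_sform_inv, Ufa.
  - now apply in_lang_Neg, in_lang_sform.
  - now rewrite occ_any_Neg, occ_any_sform.
  - now apply Lthm_neg_sform_intro.
Qed.

Theorem mainTheorem4 : forall G : calc,
  (ULIP_calc G <-> ULIP_logic G) /\ (UIP_calc G <-> UIP_logic G).
Proof.
  intro G. split; split.
  - apply ULIP_calc_logic.
  - apply ULIP_logic_calc.
  - apply UIP_calc_logic.
  - apply UIP_logic_calc.
Qed.
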